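(* For all $0\neq d\in\mathbf{N}I$, $$\chi^{ss}_d=\sum_{d^*}(-1)^{s-1}v^{-\langle d^*\rangle}\chi_{d^1}*\dots*\chi_{d^s},\qquad\langle d^*\rangle=\sum_{1\le k<l\le s}\langle d^l,d^k\rangle,$$ where the sum runs over all tuples $d^*=(d^1,\dots,d^s)$ ($s\ge1$) of nonzero elements of $\mathbf{N}I$ with $\sum_kd^k=d$ such that $\mu(d^1+\dots+d^k)>\mu(d)$ for all $k=1,\dots,s-1$.
   Context: $Q$ is a finite quiver without oriented cycles with vertex set $I$, $r_{ij}$ arrows $i\to j$, Euler form $\langle i,j\rangle=\delta_{ij}-r_{ij}$. $\mathbf{k}$ is a finite field with $v^2$ elements. Fix a weight $\Theta=\sum_i\Theta_ii^*$ ($\Theta_i\in\mathbf Z$), slope $\mu(d)=\Theta(d)/\sum_id_i$ for $d\ne0$; $X$ is semistable if $\mu(\underline{\dim}U)\le\mu(\underline{\dim}X)$ for all nonzero subrepresentations $U$. Hall algebra $\mathcal H=\bigoplus_d\mathcal H_d$ of functions on isoclasses of representations of dimension type $d$, product $(f*g)(X)=v^{\langle e,d\rangle}\sum_{U\subseteq X}f(U)g(X/U)$ for $f\in\mathcal H_d,g\in\mathcal H_e$. $\chi_d$ is the constant function $1$ on representations of dimension type $d$; $\chi^{ss}_d$ is the characteristic function of the semistable ones. *)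

From HB Require Import structures.
From mathcomp Require Import all_boot all_order all_algebra all_field.
Set Implicit Arguments. Unset Strict Implicit. Unset Printing Implicit Defensive.
Import Order.TTheory GRing.Theory Num.Theory.
Local Open Scope ring_scope.

(* Quiver Q with vertex set I (a finite type) and r i j arrows i -> j.
   Representations over a finite field k, dimension vectors d : I -> nat,
   X_i = k^(d i) as ROW vectors; an arrow a : i -> j acts by x |-> x *m X i j a. *)
Section Hall.
Variables (I : finType) (r : I -> I -> nat) (k : finFieldType).

Definition arrow_rel : rel I := fun i j => (0 < r i j)%N.

Definition acyclic : Prop :=
  forall i j : I, (0 < r i j)%N -> ~~ connect arrow_rel j i.

Definition dimvec := I -> nat.

Definition rep (d : dimvec) := forall i j : I, 'I_(r i j) -> 'M[k]_(d i, d j).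

(* families of subspaces U_i of k^(d i), each given by its canonical
   (genmx) square matrix, so that each family of subspaces is counted once *)
Definition subfam (d : dimvec) := {dffun forall i : I, 'M[k]_(d i)}.

Definition is_subrep (d : dimvec) (X : rep d) (S : subfam d) : bool :=
  [forall i, S i == <<S i>>%MS] &&
  [forall i, forall j, forall a : 'I_(r i j), (S i *m X i j a <= S j)%MS].

Definition sub_dim (d : dimvec) (S : subfam d) : dimvec := fun i => \rank (S i).
Definition quot_dim (d : dimvec) (S : subfam d) : dimvec := fun i => \rank (S i)^C%MS.

Definition sub_rep (d : dimvec) (X : rep d) (S : subfam d) : rep (sub_dim S) :=
  fun i j a => row_base (S i) *m X i j a *m pinvmx (row_base (S j)).

(* the quotient X/U, identified with a complement of U, in the basis
   row_base (S i)^C; the arrow is followed by projection along U_j *)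
Definition quot_rep (d : dimvec) (X : rep d) (S : subfam d) : rep (quot_dim S) :=
  fun i j a => row_base (S i)^C%MS *m X i j a *m proj_mx (S j)^C%MS (S j)
               *m pinvmx (row_base (S j)^C%MS).

Definition euler (a b : dimvec) : int :=
  (\sum_i ((a i * b i)%N)%:Z - \sum_i \sum_j ((r i j * a i * b j)%N)%:Z)%R.

Definition vq : algC := sqrtC (#|k|%:R).

(* elements of the Hall algebra: functions on representations (of all
   dimension types), with values in algC (containing Q(v)) *)
Definition hall := forall d : dimvec, rep d -> algC.

(* (f*g)(X) = sum_{U <= X} v^<dim X/U, dim U> f(U) g(X/U);
   for f in H_d, g in H_e this is v^<e,d> sum_U f(U) g(X/U) *)
Definition hall_mul (F G : hall) : hall := fun d X =>
  \sum_(S : subfam d | is_subrep X S)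
     vq ^ (euler (quot_dim S) (sub_dim S)) * F _ (sub_rep X S) * G _ (quot_rep X S).

Definition dimeq (a b : dimvec) : bool := [forall i, a i == b i].

Definition chi (d : dimvec) : hall := fun e X => if dimeq e d then 1 else 0.

Definition totdim (a : dimvec) : nat := (\sum_i a i)%N.

Definition theta_of (Theta : I -> int) (a : dimvec) : int := \sum_i Theta i * (a i)%:Z.

Definition slope (Theta : I -> int) (a : dimvec) : rat :=
  (theta_of Theta a)%:~R / (totdim a)%:R.

Definition semistable (Theta : I -> int) (d : dimvec) (X : rep d) : bool :=
  [forall S : subfam d, (is_subrep X S && (0 < totdim (sub_dim S))%N) ==>
                        (slope Theta (sub_dim S) <= slope Theta d)].

Definition chi_ss (Theta : I -> int) (d : dimvec) : hall :=
  fun e X => if dimeq e d && semistable Theta X then 1 else 0.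

Fixpoint chi_prod (e : dimvec) (L : seq dimvec) : hall :=
  match L with
  | [::] => chi e
  | e' :: L' => hall_mul (chi e) (chi_prod e' L')
  end.

(* tuples d^* = (d^1,...,d^s) encoded as t : 'I_s -> {ffun I -> 'I_(N.+1)},
   N = totdim d (every component of every d^k is <= N) *)
Definition dv (N : nat) (x : {ffun I -> 'I_N.+1}) : dimvec := fun i => x i.

Definition dseq (N s : nat) (t : {ffun 'I_s -> {ffun I -> 'I_N.+1}}) : seq dimvec :=
  [seq dv (t l) | l <- enum 'I_s].

Definition partial (N s : nat) (t : {ffun 'I_s -> {ffun I -> 'I_N.+1}}) (l : 'I_s)
  : dimvec := fun i => (\sum_(m < s | (m <= l)%N) dv (t m) i)%N.

Definition admissible (Theta : I -> int) (d : dimvec) (N s : nat)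
  (t : {ffun 'I_s -> {ffun I -> 'I_N.+1}}) : bool :=
  [&& (0 < s)%N,
      [forall l, (0 < totdim (dv (t l)))%N],
      dimeq (fun i => (\sum_(l < s) dv (t l) i)%N) d &
      [forall l : 'I_s, (l.+1 < s)%N ==> (slope Theta d < slope Theta (partial t l))]].

Definition euler_star (N s : nat) (t : {ffun 'I_s -> {ffun I -> 'I_N.+1}}) : int :=
  \sum_(l < s) \sum_(m < s | (m < l)%N) euler (dv (t l)) (dv (t m)).

End Hall.

(* Expanding the Hall products, (chi_(d^1) * ... * chi_(d^s))(X) counts the flags
   0 = U_0 < U_1 < ... < U_s = X of subrepresentations with dim U_l/U_(l-1) = d^l,
   weighted by v^<d^*>, which cancels the factor v^-<d^*>.  Grouping the flags
   by their first step, the right-hand side at X is A(0), where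
   A(S) = [S <> X] - sum A(T) over the subrepresentations T > S of slope > mu(d).
   The signed number of chains of subrepresentations of slope > mu(d) above S
   satisfies the same recursion, so A(0) is that signed number for S = 0.
   If X is semistable only the empty chain remains.  Otherwise let m maximise
   the excess Theta(U) dim X - Theta(X) dim U, which is modular in U; meeting
   with m then preserves positive excess, and toggling either the meet with m of
   the least chain element not below m or, if there is none, m itself is a
   sign-reversing involution on the chains, so their signed number is 0. *)

From HB Require Import structures.
From mathcomp Require Import all_boot all_order all_algebra all_field.
From Stdlib Require Import FunctionalExtensionality.
From mathcomp Require Import zify.
Import Order.TTheory GRing.Theory Num.Theory.
Set Implicit Arguments. Unset Strict Implicit. Unset Printing Implicit Defensive.
Local Open Scope ring_scope.

(** * Subfamilies and the correspondence theorem *)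

Section SubfamOrder.
Variables (I : finType) (k : finFieldType) (d : dimvec I).
Implicit Types A B C : subfam k d.

Definition subfam_le A B := [forall i, (A i <= B i)%MS].

Definition subfam_canonical A := forall i, A i = <<A i>>%MS.

Definition rk A : dimvec I := fun i => \rank (A i).

Definition subfam0 : subfam k d := [ffun i => 0].

Lemma subfam_le_refl A : subfam_le A A.
Proof. by apply/forallP => i; exact: submx_refl. Qed.

Lemma subfam_le_trans A B C : subfam_le A B -> subfam_le B C -> subfam_le A C.
Proof. by move=> /forallP h1 /forallP h2; apply/forallP => i; exact: submx_trans. Qed.

Lemma subfam_le_anti A B : subfam_canonical A -> subfam_canonical B ->
  subfam_le A B -> subfam_le B A -> A = B.
Proof.
move=> cA cB /forallP h1 /forallP h2; apply/ffunP => i.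
by rewrite cA cB; apply/genmxP; rewrite h1 h2.
Qed.

Lemma subfam0_le A : subfam_le subfam0 A.
Proof. by apply/forallP => i; rewrite ffunE sub0mx. Qed.

Lemma rk_subfam0 i : rk subfam0 i = 0%N.
Proof. by rewrite /rk ffunE mxrank0. Qed.

Lemma totdim_rk_subfam0 : totdim (rk subfam0) = 0%N.
Proof. by apply/eqP; rewrite sum_nat_eq0; apply/forallP => i; rewrite rk_subfam0. Qed.

Lemma rk_le_dim A i : (rk A i <= d i)%N.
Proof. exact: rank_leq_col. Qed.

Lemma rk_le A B i : subfam_le A B -> (rk A i <= rk B i)%N.
Proof. by move/forallP => h; exact: mxrankS. Qed.

Lemma subfam_eq_rk A B : subfam_canonical A -> subfam_canonical B ->
  subfam_le A B -> (B == A) = [forall i, rk B i == rk A i].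
Proof.
move=> cA cB hAB; apply/eqP/forallP => [-> //|h].
apply: subfam_le_anti => //; apply/forallP => i.
by rewrite -(mxrank_leqif_sup (forallP hAB i)) eq_sym; exact: h.
Qed.

Lemma subfam_le_totdim_eq A B : subfam_canonical A -> subfam_canonical B ->
  subfam_le A B -> (totdim (rk B) <= totdim (rk A))%N -> B = A.
Proof.
move=> cA cB hAB; have sum_le := leqif_sum (P := xpredT) (fun i _ => leqif_eq (rk_le i hAB)).
rewrite /totdim (geq_leqif sum_le) => /forall_inP eq_rk; apply/eqP.
by rewrite subfam_eq_rk //; apply/forallP => i; rewrite eq_sym eq_rk.
Qed.

Definition subfam_chain (A : {set subfam k d}) :=
  [forall U in A, forall V in A, subfam_le U V || subfam_le V U].

Lemma subfam_chainS (A B : {set subfam k d}) :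
  A \subset B -> subfam_chain B -> subfam_chain A.
Proof.
move=> /subsetP sAB chB; apply/forall_inP => U hU; apply/forall_inP => V hV.
exact: forall_inP (forall_inP chB U (sAB U hU)) V (sAB V hV).
Qed.

Lemma chain_least (A : {set subfam k d}) (P : pred (subfam k d)) U0 :
  {in A, forall U, subfam_canonical U} -> subfam_chain A -> U0 \in A -> P U0 ->
  exists2 U, (U \in A) && P U & forall V, V \in A -> P V -> subfam_le U V.
Proof.
move=> cA chA hU0 hPU0; have hAP0 : (U0 \in A) && P U0 by rewrite hU0.
case: (@arg_minnP _ U0 (fun U => (U \in A) && P U) (fun U => totdim (rk U)) hAP0)
  => U hAPU hmin.
exists U => // V hV hPV.
case/andP: hAPU => hU _; case/orP: (forall_inP (forall_inP chA U hU) V hV) => // hVU.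
rewrite (subfam_le_totdim_eq (cA V hV) (cA U hU) hVU) ?subfam_le_refl //.
by apply: hmin; rewrite hV.
Qed.

End SubfamOrder.

Lemma subrep_canonical (I : finType) (r : I -> I -> nat) (k : finFieldType)
  (d : dimvec I) (X : rep r k d) (A : subfam k d) :
  is_subrep X A -> subfam_canonical A.
Proof. by case/andP => /forallP h _ i; apply/eqP. Qed.

Lemma subrep0 (I : finType) (r : I -> I -> nat) (k : finFieldType)
  (d : dimvec I) (X : rep r k d) : is_subrep X (subfam0 k d).
Proof.
apply/andP; split; first by apply/forallP => i; rewrite ffunE genmx0.
by apply/'forall_forallP => i j; apply/forallP => a; rewrite !ffunE mul0mx sub0mx.
Qed.

Section Correspondence.
Variables (I : finType) (r : I -> I -> nat) (k : finFieldType).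
Variables (d : dimvec I) (X : rep r k d) (S : subfam k d).
Hypothesis subrepS : is_subrep X S.

Let C i : 'M[k]_(\rank (S i)^C, d i) := row_base (S i)^C%MS.
Let P i : 'M[k]_(d i) := proj_mx (S i)^C%MS (S i).

(* quot_rep realises X/S on the complements (S i)^C, in the bases row_base;
   a subfamily T of X/S corresponds to T + S in X. *)
Definition quot_preim (T : subfam k (quot_dim S)) : subfam k d :=
  [ffun i => <<(T i *m C i + S i)%MS>>%MS].
Definition quot_img (T : subfam k d) : subfam k (quot_dim S) :=
  [ffun i => <<T i *m P i *m pinvmx (C i)>>%MS].

Lemma cap_compl_S i : ((S i)^C :&: S i)%MS = 0.
Proof. by rewrite capmxC capmx_compl. Qed.

Lemma compl_S_full i m (w : 'M[k]_(m, d i)) : (w <= (S i)^C + S i)%MS.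
Proof. by rewrite addsmxC; apply: submx_full; exact: addsmx_compl_full. Qed.

Lemma proj_baseK i m (w : 'M[k]_(m, d i)) : w *m P i *m pinvmx (C i) *m C i = w *m P i.
Proof. by apply: mulmxKpV; rewrite eq_row_base proj_mx_sub. Qed.

Lemma proj_le i m (T : 'M[k]_(m, d i)) : (S i <= T)%MS -> (T *m P i <= T)%MS.
Proof.
move=> hST; have h := proj_mx_compl_sub (compl_S_full T).
have -> : T *m P i = T - (T - T *m P i) by rewrite opprB addrC subrK.
by apply: addmx_sub; rewrite ?submx_refl // eqmx_opp (submx_trans h).
Qed.

Lemma le_proj_add i m (T : 'M[k]_(m, d i)) : (T <= T *m P i + S i)%MS.
Proof.
have h := proj_mx_compl_sub (compl_S_full T).
rewrite -{1}[T](subrK (T *m P i)) addrC.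
by apply: addmx_sub_adds; rewrite ?submx_refl // addrC subrK.
Qed.

Lemma quot_imgK T : subfam_canonical T -> quot_img (quot_preim T) = T.
Proof.
move=> cT; apply/ffunP => i; rewrite !ffunE [RHS]cT; apply/genmxP/eqmxP.
have projE : ((T i *m C i + S i)%MS *m P i :=: T i *m C i)%MS.
  apply: eqmx_trans (addsmxMr _ _ _) _.
  rewrite (proj_mx_0 (cap_compl_S i) (submx_refl _)) proj_mx_id ?cap_compl_S //.
    exact: addsmx0.
  by rewrite -(eq_row_base (S i)^C%MS) submxMl.
have := eqmxMr (pinvmx (C i)) projE; rewrite (mulmxKp (row_base_free _)).
exact: eqmx_trans (eqmxMr _ (eqmxMr _ (genmxE _))).
Qed.

Lemma quot_preimK T : is_subrep X T -> subfam_le S T -> quot_preim (quot_img T) = T.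
Proof.
move=> hT /forallP hST; apply/ffunP => i; rewrite ffunE [RHS](subrep_canonical hT).
apply/genmxP/eqmxP.
have imgE : ((quot_img T i *m C i) :=: T i *m P i)%MS.
  by rewrite ffunE; apply: eqmx_trans (eqmxMr _ (genmxE _)) _; rewrite proj_baseK.
apply/eqmxP/andP; split; first by rewrite addsmx_sub imgE hST andbT proj_le.
by apply: submx_trans (le_proj_add (T i)) _; apply: addsmxS; rewrite ?submx_refl ?imgE.
Qed.

Lemma S_le_quot_preim T : subfam_le S (quot_preim T).
Proof. by apply/forallP => i; rewrite ffunE genmxE addsmxSr. Qed.

Lemma quot_preim_le T1 T2 : subfam_canonical T1 -> subfam_canonical T2 ->
  subfam_le (quot_preim T1) (quot_preim T2) = subfam_le T1 T2.
Proof.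
have mono_img U1 U2 : subfam_le U1 U2 -> subfam_le (quot_img U1) (quot_img U2).
  by move/forallP => h; apply/forallP => i; rewrite !ffunE !genmxE !submxMr.
move=> c1 c2; apply/idP/idP => [/mono_img|/forallP h]; first by rewrite !quot_imgK.
apply/forallP => i; rewrite !ffunE !genmxE.
by apply: addsmxS; rewrite ?submx_refl ?submxMr.
Qed.

Lemma rk_quot_preim T i : rk (quot_preim T) i = (rk T i + rk S i)%N.
Proof.
rewrite /rk ffunE genmxE mxrank_disjoint_sum ?mxrankMfree ?row_base_free //.
apply/eqP; rewrite -submx0 -(cap_compl_S i) capmxS ?submx_refl //.
by rewrite -(eq_row_base (S i)^C%MS) submxMl.
Qed.

Lemma quot_preim_subrep T : is_subrep (quot_rep X S) T -> is_subrep X (quot_preim T).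
Proof.
case/andP => _ /'forall_forallP hT; apply/andP; split.
  by apply/forallP => i; rewrite ffunE genmx_id.
case/andP: subrepS => _ /'forall_forallP hS.
apply/'forall_forallP => i j; apply/forallP => a.
rewrite !ffunE (eqmxMr _ (genmxE _)) genmxE addsmxMr addsmx_sub.
rewrite (submx_trans (forallP (hS i j) a) (addsmxSr _ _)) andbT.
set w := T i *m C i *m @X i j a.
rewrite -(add_proj_mx (cap_compl_S j) (compl_S_full w)).
apply: addmx_sub_adds; last exact: proj_mx_sub.
rewrite -(proj_baseK w); apply: submxMr.
by move: (forallP (hT i j) a); rewrite /quot_rep /w !mulmxA.
Qed.

Lemma quot_img_subrep T : is_subrep X T -> subfam_le S T ->
  is_subrep (quot_rep X S) (quot_img T).
Proof.
case/andP => _ /'forall_forallP hT /forallP hST; apply/andP; split.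
  by apply/forallP => i; rewrite ffunE genmx_id.
apply/'forall_forallP => i j; apply/forallP => a.
rewrite !ffunE (eqmxMr _ (genmxE _)) genmxE.
have -> : quot_rep X S a = C i *m @X i j a *m P j *m pinvmx (C j) by [].
rewrite (mulmxA _ _ (pinvmx (C j))) (mulmxA _ _ (P j)) (mulmxA _ (C i)) proj_baseK.
apply/submxMr/submxMr/(submx_trans _ (forallP (hT i j) a)).
by apply: submxMr; rewrite proj_le.
Qed.

Lemma sum_subrep_above (F : subfam k d -> algC) (Q : pred (subfam k d)) :
  \sum_(T | is_subrep X T && subfam_le S T && Q T) F T =
  \sum_(T | is_subrep (quot_rep X S) T && Q (quot_preim T)) F (quot_preim T).
Proof.
rewrite (reindex_onto quot_preim quot_img); last first.
  by move=> T /andP [/andP [h1 h2] _]; rewrite quot_preimK.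
apply: eq_bigl => T; apply/idP/idP.
  by case/andP => /andP [/andP [h1 h2] ->] /eqP <-; rewrite quot_img_subrep.
case/andP => h1 ->; rewrite quot_preim_subrep // S_le_quot_preim.
by rewrite quot_imgK ?eqxx //; exact: subrep_canonical h1.
Qed.

End Correspondence.

Arguments quot_preim {I k d} S T.
Arguments quot_img {I k d} S T.

(** * Flags and Hall products *)

Section DimensionVectors.
Variables (I : finType) (r : I -> I -> nat).
Implicit Types a b c : dimvec I.

Lemma dimeqP a b : reflect (a =1 b) (dimeq a b).
Proof. by apply: (iffP forallP) => h i; apply/eqP. Qed.

Lemma dimeq_refl a : dimeq a a.
Proof. exact/dimeqP. Qed.

Lemma dimeq_ext a b c : a =1 b -> dimeq a c = dimeq b c.
Proof. by move=> h; rewrite (functional_extensionality _ _ h). Qed.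

Lemma euler_ext a b a' b' : a =1 a' -> b =1 b' -> euler r a b = euler r a' b'.
Proof.
by move=> h1 h2; rewrite (functional_extensionality _ _ h1) (functional_extensionality _ _ h2).
Qed.

Definition sum_dims (L : seq (dimvec I)) : dimvec I := fun i => (\sum_(x <- L) x i)%N.

(* The exponent accumulated along a flag whose successive quotients are L. *)
Fixpoint euler_seq (L : seq (dimvec I)) : int :=
  if L is e :: L' then euler r (sum_dims L') e + euler_seq L' else 0.

Lemma euler0l b : euler r (fun _ => 0%N) b = 0.
Proof.
rewrite /euler big1 ?big1 ?subrr // => i _.
by rewrite big1 // => j _; rewrite muln0 mul0n.
Qed.

Lemma eulerDl a b c : euler r (fun i => a i + b i)%N c = euler r a c + euler r b c.
Proof.
rewrite /euler addrACA -opprD -!big_split; congr (_ - _); apply: eq_bigr => i _.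
  by rewrite mulnDl PoszD.
by rewrite -big_split; apply: eq_bigr => j _; rewrite mulnDr mulnDl PoszD.
Qed.

Lemma euler_sum_dims L c : euler r (sum_dims L) c = \sum_(x <- L) euler r x c.
Proof.
elim: L => [|x L IH].
  by rewrite big_nil -(euler0l c); apply: euler_ext => // i; rewrite /sum_dims big_nil.
by rewrite big_cons -IH -eulerDl; apply: euler_ext => // i; rewrite /sum_dims big_cons.
Qed.

End DimensionVectors.

Lemma sum_neq0_exists (T : finType) (V : nmodType) (P : pred T) (F : T -> V) :
  \sum_(x | P x) F x != 0 -> exists2 x, P x & F x != 0.
Proof.
move=> nz; apply/exists_inP; apply: contraR nz => /exists_inPn h.
by apply/eqP/big1 => x /h /negPn /eqP.
Qed.

Lemma vq_neq0 (k : finFieldType) : vq k != 0.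
Proof. by rewrite /vq sqrtC_eq0 pnatr_eq0 -lt0n; apply/card_gt0P; exists 0. Qed.

Section Flags.
Variables (I : finType) (r : I -> I -> nat) (k : finFieldType).

Fixpoint flag_count (d : dimvec I) (X : rep r k d) (S : subfam k d) (e : dimvec I)
    (L : seq (dimvec I)) : algC :=
  if L is e' :: L' then
    \sum_(T | is_subrep X T && subfam_le S T && dimeq (fun i => rk T i - rk S i)%N e)
      flag_count X T e' L'
  else if dimeq (fun i => d i - rk S i)%N e then 1 else 0.

Lemma flag_count_dim (d : dimvec I) (X : rep r k d) L : forall e S,
  flag_count X S e L != 0 -> forall i, (d i - rk S i)%N = sum_dims (e :: L) i.
Proof.
rewrite /sum_dims; elim: L => [|e' L IH] e S /=.
  by case: ifP => [/dimeqP h _ i|]; rewrite ?eqxx // big_cons big_nil addn0 h.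
case/sum_neq0_exists => T /andP [/andP [_ hST] /dimeqP hT] /IH hdim i.
have := hdim i; rewrite !big_cons => <-; rewrite -hT.
by have := rk_le i hST; have := rk_le_dim T i; lia.
Qed.

Lemma quot_preim0 (d : dimvec I) (S : subfam k d) :
  subfam_canonical S -> quot_preim S (subfam0 k (quot_dim S)) = S.
Proof.
move=> cS; apply/ffunP => i; rewrite !ffunE [RHS]cS mul0mx.
by apply/genmxP/eqmxP; exact: adds0mx.
Qed.

Lemma flag_count_quot (d : dimvec I) (X : rep r k d) (S : subfam k d) L :
  is_subrep X S -> forall e T, is_subrep (quot_rep X S) T ->
  flag_count (quot_rep X S) T e L = flag_count X (quot_preim S T) e L.
Proof.
move=> hS; elim: L => [|e' L IH] e T hT /=.
  congr (if _ then _ else _); apply: dimeq_ext => i.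
  by rewrite rk_quot_preim /quot_dim mxrank_compl subnDA subnAC.
have le_preim U : subfam_le (quot_preim S T) U =
    subfam_le S U && subfam_le (quot_preim S T) U.
  case: (boolP (subfam_le _ U)) => h; rewrite ?andbF // andbT.
  by rewrite (subfam_le_trans (S_le_quot_preim T) h).
under [RHS]eq_bigl => U do rewrite -andbA le_preim !andbA -andbA.
rewrite [RHS](sum_subrep_above hS).
apply: eq_big => [U|U /andP [/andP [hU _] _]]; last exact: IH.
case: (boolP (is_subrep _ U)) => //= hU.
rewrite quot_preim_le; [|exact: subrep_canonical hT|exact: subrep_canonical hU].
by congr (_ && _); apply: dimeq_ext => i; rewrite !rk_quot_preim subnDr.
Qed.

Lemma chi_prod_flag_count L : forall e (d : dimvec I) (X : rep r k d),
  chi_prod e L X = vq k ^ euler_seq r (e :: L) * flag_count X (subfam0 k d) e L.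
Proof.
elim: L => [|e' L IH] e d X /=.
  rewrite [sum_dims _](_ : _ = fun _ => 0%N); last first.
    by apply: functional_extensionality => i; rewrite /sum_dims big_nil.
  rewrite euler0l add0r expr0z mul1r /chi; congr (if _ then _ else _).
  by apply: dimeq_ext => i; rewrite rk_subfam0 subn0.
rewrite /hall_mul mulr_sumr.
under [RHS]eq_bigl => T do rewrite subfam0_le andbT.
rewrite [RHS]big_mkcondr; apply: eq_bigr => T hT.
rewrite IH flag_count_quot ?subrep0 // quot_preim0; last exact: subrep_canonical hT.
rewrite /chi (@dimeq_ext _ _ (fun i => rk T i - rk (subfam0 k d) i)%N); last first.
  by move=> i; rewrite rk_subfam0 subn0.
case: ifP => /= [/dimeqP hdim|_]; last by rewrite mulr0 mul0r.
have [->|nz] := eqVneq (flag_count X T e' L) 0; first by rewrite !mulr0.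
rewrite mulr1 mulrA -expfzDr ?vq_neq0 //; congr (_ ^ (_ + _) * _).
apply: euler_ext => i; last by rewrite -hdim rk_subfam0 subn0.
by rewrite /quot_dim mxrank_compl (flag_count_dim nz).
Qed.

End Flags.

(** * Admissible tuples *)

Section FinTuples.
Variable D : finType.

Definition fcons s (x : D) (t : {ffun 'I_s -> D}) : {ffun 'I_s.+1 -> D} :=
  [ffun i => if unlift ord0 i is Some j then t j else x].
Definition ftail s (t : {ffun 'I_s.+1 -> D}) : {ffun 'I_s -> D} :=
  [ffun j => t (lift ord0 j)].

Lemma fcons0 s x (t : {ffun 'I_s -> D}) : fcons x t ord0 = x.
Proof. by rewrite ffunE unlift_none. Qed.

Lemma fconsS s x (t : {ffun 'I_s -> D}) j : fcons x t (lift ord0 j) = t j.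
Proof. by rewrite ffunE liftK. Qed.

Lemma fconsK s x (t : {ffun 'I_s -> D}) : ftail (fcons x t) = t.
Proof. by apply/ffunP => j; rewrite ffunE fconsS. Qed.

Lemma fcons_eta s (t : {ffun 'I_s.+1 -> D}) : fcons (t ord0) (ftail t) = t.
Proof. by apply/ffunP => i; rewrite ffunE; case: unliftP => [j ->|->] //; rewrite ffunE. Qed.

Lemma sum_fcons (V : nmodType) s (F : {ffun 'I_s.+1 -> D} -> V) :
  \sum_t F t = \sum_x \sum_(t : {ffun 'I_s -> D}) F (fcons x t).
Proof.
rewrite pair_big (reindex (fun p : D * {ffun 'I_s -> D} => fcons p.1 p.2)) //.
apply: onW_bij; exists (fun t : {ffun _ -> D} => (t ord0, ftail t)) => [[x t]|t] /=.
  by rewrite fcons0 fconsK.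
by rewrite fcons_eta.
Qed.

Lemma sum_ffun_ord0 (V : nmodType) (F : {ffun 'I_0 -> D} -> V) (t0 : {ffun 'I_0 -> D}) :
  \sum_t F t = F t0.
Proof. by apply: big_pred1 => t /=; apply/esym/eqP/ffunP => -[]. Qed.

Lemma forall_ord0 (P : pred 'I_0) : [forall l, P l].
Proof. by apply/forallP => -[]. Qed.

Lemma forall_ordS s (P : 'I_s.+1 -> bool) :
  [forall l, P l] = P ord0 && [forall l : 'I_s, P (lift ord0 l)].
Proof.
apply/forallP/andP => [h|[h0 /forallP h] l]; first by split=> //; apply/forallP.
by case: (unliftP ord0 l) => [j ->|->].
Qed.

End FinTuples.

Section Admissible.
Variables (I : finType) (r : I -> I -> nat) (Theta : I -> int) (d : dimvec I).
Local Notation N := (totdim d).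
Local Notation D := {ffun I -> 'I_N.+1}.
Implicit Types (a b : dimvec I) (x : D).

Lemma dseq_fcons s x (t : {ffun 'I_s -> D}) : dseq (fcons x t) = dv x :: dseq t.
Proof.
rewrite /dseq enum_ordSl /= fcons0 -map_comp; congr (_ :: _).
by apply: eq_map => j /=; rewrite fconsS.
Qed.

Lemma dseq0 (t : {ffun 'I_0 -> D}) : dseq t = [::].
Proof. by rewrite /dseq; case: (enum 'I_0) (size_enum_ord 0) => [|? ?]. Qed.

Lemma sum_dims_dseq s (t : {ffun 'I_s -> D}) i :
  sum_dims (dseq t) i = (\sum_(l < s) dv (t l) i)%N.
Proof. by rewrite /sum_dims /dseq big_map big_enum. Qed.

Lemma euler_star_fcons s x (t : {ffun 'I_s -> D}) :
  euler_star r (fcons x t) = euler r (sum_dims (dseq t)) (dv x) + euler_star r t.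
Proof.
rewrite /euler_star big_ord_recl /= big1 ?add0r; last by move=> m; rewrite ltn0.
rewrite euler_sum_dims /dseq big_map big_enum /= -big_split /=.
apply: eq_bigr => l _; rewrite big_mkcond big_ord_recl /= fcons0 fconsS; congr (_ + _).
by rewrite [RHS]big_mkcond; apply: eq_bigr => m _; rewrite !fconsS.
Qed.

Lemma euler_seq_dseq s (t : {ffun 'I_s -> D}) : euler_seq r (dseq t) = euler_star r t.
Proof.
elim: s t => [|s IH] t; first by rewrite dseq0 /euler_star big_ord0.
by rewrite -(fcons_eta t) dseq_fcons euler_star_fcons /= IH.
Qed.

Definition dimD a b : dimvec I := fun i => (a i + b i)%N.

(* Admissibility of a tuple continuing a flag whose part so far has dimension b. *)
Definition adm_from b s (t : {ffun 'I_s -> D}) : bool :=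
  [&& (0 < s)%N, [forall l, (0 < totdim (dv (t l)))%N],
      dimeq (fun i => b i + \sum_(l < s) dv (t l) i)%N d &
      [forall l : 'I_s, (l.+1 < s)%N ==>
         (slope Theta d < slope Theta (dimD b (partial t l)))]].

Lemma admissible_adm_from s (t : {ffun 'I_s -> D}) :
  admissible Theta d t = adm_from (fun _ => 0%N) t.
Proof. by []. Qed.

Lemma partial_fcons0 s x (t : {ffun 'I_s -> D}) : partial (fcons x t) ord0 = dv x.
Proof.
apply: functional_extensionality => i.
by rewrite /partial big_mkcond big_ord_recl /= fcons0 big1 ?addn0.
Qed.

Lemma partial_fconsS s x (t : {ffun 'I_s -> D}) l :
  partial (fcons x t) (lift ord0 l) = dimD (dv x) (partial t l).
Proof.
apply: functional_extensionality => i.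
rewrite /partial big_mkcond big_ord_recl /= fcons0; congr (_ + _)%N.
by rewrite [RHS]big_mkcond; apply: eq_bigr => m _; rewrite /= !fconsS.
Qed.

Lemma adm_from_fcons b s x (t : {ffun 'I_s -> D}) :
  adm_from b (fcons x t) = (0 < totdim (dv x))%N &&
    (if s is 0 then dimeq (dimD b (dv x)) d
     else (slope Theta d < slope Theta (dimD b (dv x))) && adm_from (dimD b (dv x)) t).
Proof.
rewrite /adm_from !forall_ordS fcons0 partial_fcons0 /=.
under eq_forallb => l do rewrite fconsS.
under [in X in _ && X]eq_forallb => l do rewrite partial_fconsS /bump /= add1n ltnS.
have -> : (fun i => b i + \sum_(l < s.+1) dv (fcons x t l) i)%N =
          (fun i => dimD b (dv x) i + \sum_(l < s) dv (t l) i)%N.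
  apply: functional_extensionality => i; rewrite big_ord_recl fcons0 /dimD -addnA.
  by congr (_ + (_ + _))%N; apply: eq_bigr => l _; rewrite fconsS.
have dimDA a : dimD b (dimD (dv x) a) = dimD (dimD b (dv x)) a.
  by apply: functional_extensionality => i; rewrite /dimD addnA.
under [in X in _ && X]eq_forallb => l do rewrite dimDA.
case: s t => [|s] t /=.
  have -> : (fun i => dimD b (dv x) i + \sum_(l < 0) dv (t l) i)%N = dimD b (dv x).
    by apply: functional_extensionality => i; rewrite big_ord0 addn0.
  by rewrite !forall_ord0 !andbT.
by case: (0 < _)%N; case: (_ < _); case: [forall l, _]; case: dimeq; case: [forall l, _].
Qed.

Definition mkD a : D := [ffun i => inord (a i)].

Lemma dv_mkD a i : (a i <= N)%N -> dv (mkD a) i = a i.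
Proof. by move=> h; rewrite /dv ffunE inordK. Qed.

Lemma sum_dimeq (V : nmodType) a (F : D -> V) : (forall i, a i <= N)%N ->
  \sum_x (if dimeq a (dv x) then F x else 0) = F (mkD a).
Proof.
move=> ha; rewrite (bigD1 (mkD a)) //= big1 ?addr0 => [|x hx].
  by rewrite ifT //; apply/dimeqP => i; rewrite dv_mkD.
rewrite ifF //; apply: contraNF hx => /dimeqP h; apply/eqP/ffunP => i.
by apply/val_inj; rewrite ffunE /= inordK ?h // ltnS -h.
Qed.

Lemma le_totdim i : (d i <= N)%N.
Proof. by rewrite /totdim (bigD1 i) //= leq_addr. Qed.

End Admissible.

Section AdmissibleSums.
Variables (I : finType) (r : I -> I -> nat) (k : finFieldType) (Theta : I -> int).
Variables (d : dimvec I) (X : rep r k d).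
Local Notation N := (totdim d).
Local Notation D := {ffun I -> 'I_N.+1}.
Implicit Types S T : subfam k d.

Lemma flag_count_cons S e e' L :
  flag_count X S e (e' :: L) =
  \sum_(T | is_subrep X T && subfam_le S T)
     (if dimeq (fun i => rk T i - rk S i)%N e then flag_count X T e' L else 0).
Proof. by rewrite /= big_mkcondr. Qed.

Definition adm_term s S : algC :=
  \sum_(x : D) \sum_(t : {ffun 'I_s -> D})
     (if adm_from Theta (rk S) (fcons x t)
      then (-1) ^+ s * flag_count X S (dv x) (dseq t) else 0).

Definition adm_sum n S : algC := \sum_(s < n) adm_term s S.

Definition destab_above S T : bool :=
  is_subrep X T && subfam_le S T && (T != S) && (slope Theta d < slope Theta (rk T)).

Lemma rk_diff_le S T i : (rk T i - rk S i <= N)%N.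
Proof. exact: leq_trans (leq_subr _ _) (leq_trans (rk_le_dim T i) (le_totdim d i)). Qed.

Lemma totdim_rk_diff_gt0 S T : subfam_canonical S -> subfam_canonical T ->
  subfam_le S T -> (0 < totdim (dv (mkD d (fun i => rk T i - rk S i)%N)))%N = (T != S).
Proof.
move=> cS cT hST; rewrite (subfam_eq_rk cS cT hST) lt0n sum_nat_eq0.
congr (~~ _); apply: eq_forallb => i; rewrite dv_mkD ?rk_diff_le // subn_eq0 eqn_leq.
by rewrite (rk_le i hST) andbT.
Qed.

Lemma dimD_rk_diff S T : subfam_le S T ->
  dimD (rk S) (dv (mkD d (fun i => rk T i - rk S i)%N)) = rk T.
Proof.
move=> hST; apply: functional_extensionality => i.
by rewrite /dimD dv_mkD ?rk_diff_le // subnKC // rk_le.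
Qed.

Lemma adm_term0 S : adm_term 0 S = if dimeq (rk S) d then 0 else 1.
Proof.
have le_codim i : (d i - rk S i <= N)%N.
  exact: leq_trans (leq_subr _ _) (le_totdim d i).
rewrite /adm_term.
under eq_bigr => x _ do rewrite (sum_ffun_ord0 _ [ffun=> x]) adm_from_fcons dseq0 /=.
transitivity (if (0 < totdim (dv (mkD d (fun i => d i - rk S i)%N)))%N then 1 else 0 : algC).
  rewrite -(sum_dimeq (fun x : D => if (0 < totdim (dv x))%N then 1 else 0) le_codim).
  apply: eq_bigr => x _; rewrite expr0 mul1r.
  case: (boolP (dimeq _ (dv x))) => [/dimeqP hx|_]; last by rewrite if_same.
  rewrite (_ : dimeq (dimD (rk S) (dv x)) d) ?andbT //.
  by apply/dimeqP => i; rewrite /dimD -hx subnKC ?rk_le_dim.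
rewrite lt0n sum_nat_eq0.
have -> : [forall i, dv (mkD d (fun i => d i - rk S i)%N) i == 0%N] = dimeq (rk S) d.
  by apply: eq_forallb => i; rewrite dv_mkD // subn_eq0 eqn_leq rk_le_dim.
by case: dimeq.
Qed.

Lemma if_mulr_sum (J : finType) (b : bool) (c : algC) (P : pred J) (F : J -> algC) :
  (if b then c * \sum_(j | P j) F j else 0) = \sum_(j | P j) (if b then c * F j else 0).
Proof. by case: b; rewrite ?mulr_sumr // big1. Qed.

(* Splitting off the first step S < T of the flag. *)
Lemma adm_term_succ s S : is_subrep X S ->
  adm_term s.+1 S = - \sum_(T | destab_above S T) adm_term s T.
Proof.
move=> hS; rewrite /adm_term; under eq_bigr => x _ do rewrite sum_fcons.
under eq_bigr => x _ do under eq_bigr => y _ do under eq_bigr => t _ do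
  rewrite adm_from_fcons dseq_fcons flag_count_cons if_mulr_sum.
under eq_bigr => x _ do under eq_bigr => y _ do rewrite exchange_big.
under eq_bigr => x _ do rewrite exchange_big.
rewrite exchange_big -sumrN big_mkcond [RHS]big_mkcond; apply: eq_bigr => T _.
rewrite /destab_above; case: (boolP (is_subrep X T && subfam_le S T)) => //= /andP [hT hST].
have cS := subrep_canonical hS; have cT := subrep_canonical hT.
transitivity (\sum_(x : D) if dimeq (fun i => rk T i - rk S i)%N (dv x) then
  \sum_(y : D) \sum_(t : {ffun 'I_s -> D})
    (if [&& (0 < totdim (dv x))%N, slope Theta d < slope Theta (dimD (rk S) (dv x))
          & adm_from Theta (dimD (rk S) (dv x)) (fcons y t)]
     then (-1) ^+ s.+1 * flag_count X T (dv y) (dseq t) else 0) else 0).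
  apply: eq_bigr => x _; case: dimeq => //.
  by rewrite big1 // => y _; rewrite big1 // => t _; rewrite mulr0 if_same.
rewrite sum_dimeq; last exact: rk_diff_le.
rewrite totdim_rk_diff_gt0 // dimD_rk_diff //.
case: (T != S); case: (_ < _) => /=; try by rewrite big1 // => y _; rewrite big1.
rewrite -sumrN; apply: eq_bigr => y _; rewrite -sumrN; apply: eq_bigr => t _.
by case: adm_from; rewrite ?oppr0 // exprS mulN1r mulNr.
Qed.

Lemma adm_sum_succ n S : is_subrep X S ->
  adm_sum n.+1 S = (if dimeq (rk S) d then 0 else 1) - \sum_(T | destab_above S T) adm_sum n T.
Proof.
move=> hS; rewrite /adm_sum big_ord_recl adm_term0; congr (_ + _).
under eq_bigr => s _ do rewrite adm_term_succ //.
by rewrite sumrN exchange_big.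
Qed.

End AdmissibleSums.

(** * Chains of destabilising subrepresentations *)

Lemma setU1_neq0 (T : finType) (x : T) (A : {set T}) : x |: A != set0.
Proof. by apply/set0Pn; exists x; exact: setU11. Qed.

Section Chains.
Variables (I : finType) (r : I -> I -> nat) (k : finFieldType) (Theta : I -> int).
Variables (d : dimvec I) (X : rep r k d).
Local Notation above := (destab_above Theta X).
Implicit Types (S U V : subfam k d) (A : {set subfam k d}).

Definition chain_above S A := [forall U in A, above S U] && subfam_chain A.

Definition chain_sum S : algC := \sum_(A | chain_above S A) (-1) ^+ #|A|.

Lemma above_subrep S U : above S U -> is_subrep X U.
Proof. by case/andP => /andP [/andP []]. Qed.

Lemma above_trans S U V : is_subrep X S -> above S U -> above U V -> above S V.
Proof.
move=> hS /andP [/andP [/andP [hU hSU] hUS] _] /andP [/andP [/andP [hV hUV] _] slV].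
rewrite /destab_above hV (subfam_le_trans hSU hUV) slV andbT /=.
apply: contraNneq hUS => eVS; rewrite eVS in hUV.
by apply/eqP/subfam_le_anti; [exact: subrep_canonical hU|exact: subrep_canonical hS|..].
Qed.

Lemma chain_above0 S : chain_above S set0.
Proof. by apply/andP; split; apply/forall_inP => U; rewrite in_set0. Qed.

Lemma chain_above_mem S A U : chain_above S A -> U \in A -> above S U.
Proof. by case/andP => /forall_inP h _; exact: h. Qed.

Lemma chain_above_canonical S A : chain_above S A -> {in A, forall U, subfam_canonical U}.
Proof. by move=> hA U /(chain_above_mem hA) /above_subrep /subrep_canonical. Qed.

Lemma chain_above_chain S A : chain_above S A -> subfam_chain A.
Proof. by case/andP. Qed.

Definition chain_min S A := odflt S [pick U in A | [forall V in A, subfam_le U V]].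

Lemma chain_minP S A : chain_above S A -> A != set0 ->
  chain_min S A \in A /\ {in A, forall V, subfam_le (chain_min S A) V}.
Proof.
move=> hA /set0Pn [U0 hU0]; rewrite /chain_min.
case: pickP => [U /andP [hU /forall_inP] //|none].
have [U /andP [hU _] hmin] :=
  chain_least (P := xpredT) (chain_above_canonical hA) (chain_above_chain hA) hU0 isT.
by move: (none U); rewrite /= hU => /negbT/negP[]; apply/forall_inP => V hV; exact: hmin.
Qed.

Lemma chain_min_eq S A U : chain_above S A -> U \in A ->
  {in A, forall V, subfam_le U V} -> chain_min S A = U.
Proof.
move=> hA hU hmin; have [|hm hmmin] := chain_minP hA; first by apply/set0Pn; exists U.
apply: subfam_le_anti; rewrite ?hmmin ?hmin //; exact: chain_above_canonical hA _ _.
Qed.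

Lemma chain_above_setU1 S U A : is_subrep X S -> above S U ->
  [&& chain_above S (U |: A), chain_min S (U |: A) == U & (U |: A) :\ U == A] =
  chain_above U A.
Proof.
move=> hS hSU; apply/and3P/idP => [[hA /eqP hm /eqP hD]|hA].
  have hUA : U \notin A by rewrite -hD setD11.
  have [_] := chain_minP hA (setU1_neq0 U A); rewrite hm => hmin.
  apply/andP; split; last exact: subfam_chainS (subsetUr _ _) (chain_above_chain hA).
  apply/forall_inP => V hV; have hUV := chain_above_mem hA (setU1r U hV).
  move: hUV; rewrite /destab_above hmin ?setU1r // => /andP [/andP [/andP [-> _] _] ->].
  by rewrite andbT; apply: contraNneq hUA => <-.
have hUA : U \notin A.
  by apply/negP => /(chain_above_mem hA) /andP [/andP [_ /eqP]].
have hUle : {in U |: A, forall V, subfam_le U V}.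
  move=> V /setU1P [->|hV]; first exact: subfam_le_refl.
  by case/andP: (chain_above_mem hA hV) => /andP [/andP [_ ->]].
have hA' : chain_above S (U |: A).
  apply/andP; split.
    apply/forall_inP => V /setU1P [->|hV] //.
    exact: above_trans hS hSU (chain_above_mem hA hV).
  apply/forall_inP => V hV; apply/forall_inP => W hW.
  case/setU1P: hV => [->|hV]; first by rewrite hUle.
  case/setU1P: hW => [->|hW]; first by rewrite hUle ?orbT ?setU1r.
  exact: forall_inP (forall_inP (chain_above_chain hA) V hV) W hW.
by rewrite hA' (chain_min_eq hA' (setU11 U A) hUle) eqxx setU1K.
Qed.

(* Group the nonempty chains by their least element. *)
Lemma chain_sum_rec S : is_subrep X S -> chain_sum S = 1 - \sum_(U | above S U) chain_sum U.
Proof.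
move=> hS; rewrite /chain_sum (bigD1 set0) ?chain_above0 //= cards0 expr0; congr (_ + _).
rewrite (partition_big (chain_min S) (above S)) /=; last first.
  by move=> A /andP [hA hne]; exact: chain_above_mem hA (chain_minP hA hne).1.
rewrite -sumrN; apply: eq_bigr => U hU.
rewrite (reindex_onto (fun A => U |: A) (fun A => A :\ U)) /=; last first.
  move=> A /andP [/andP [hA hne] /eqP hm]; apply: setD1K.
  by rewrite -hm; exact: (chain_minP hA hne).1.
rewrite -sumrN; apply: eq_big => [A|A].
  by rewrite setU1_neq0 andbT -andbA chain_above_setU1.
rewrite setU1_neq0 andbT -andbA chain_above_setU1 // => hA.
have hUA : U \notin A by apply/negP => /(chain_above_mem hA) /andP [/andP [_ /eqP]].
by rewrite cardsU1 hUA add1n exprS mulN1r.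
Qed.

Lemma above_totdim_lt S U : is_subrep X S -> above S U -> (totdim (rk S) < totdim (rk U))%N.
Proof.
move=> hS /andP [/andP [/andP [hU hSU] hUS] _]; rewrite ltnNge; apply: contra hUS => hle.
by apply/eqP/subfam_le_totdim_eq; [exact: subrep_canonical hS|exact: subrep_canonical hU|..].
Qed.

Lemma totdim_rk_full S : (totdim d <= totdim (rk S))%N -> dimeq (rk S) d.
Proof.
have sum_le := leqif_sum (P := xpredT) (fun i _ => leqif_eq (rk_le_dim S i)).
by rewrite /totdim (geq_leqif sum_le) => /forall_inP h; apply/dimeqP => i; apply/eqP/h.
Qed.

(* The recursions of adm_sum and chain_sum agree as long as n bounds the length
   of the chains above S. *)
Lemma adm_sum_chain_sum n S : is_subrep X S -> ~~ dimeq (rk S) d ->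
  (totdim d - totdim (rk S) <= n)%N -> adm_sum Theta X n S = chain_sum S.
Proof.
elim: n S => [|n IH] S hS hfull hn.
  by move: hfull; rewrite totdim_rk_full // -subn_eq0 -leqn0.
rewrite adm_sum_succ // (negbTE hfull) chain_sum_rec //; congr (_ - _).
apply: eq_bigr => U hSU; have hU := above_subrep hSU; apply: IH => //.
  apply: contraTN hSU => /dimeqP eU.
  by rewrite /destab_above (functional_extensionality _ _ eU) ltxx andbF.
by have := above_totdim_lt hS hSU; lia.
Qed.

End Chains.

(** * The sign-reversing involution *)

Section Toggle.
Variable T : finType.
Implicit Types (A : {set T}) (w : T).

Definition toggle A w : {set T} := if w \in A then A :\ w else w |: A.

Lemma in_toggle A w x : (x \in toggle A w) = if x == w then w \notin A else x \in A.
Proof.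
by rewrite /toggle; case: ifP => hw; rewrite ?in_setD1 ?in_setU1; case: eqP => [->|].
Qed.

Lemma toggleK A w : toggle (toggle A w) w = A.
Proof. by apply/setP => x; rewrite !in_toggle; case: eqP => [->|] //; rewrite eqxx negbK. Qed.

Lemma sign_toggle (R : pzRingType) A w : (-1) ^+ #|toggle A w| = - (-1) ^+ #|A| :> R.
Proof.
rewrite /toggle; case: ifP => hw; last by rewrite cardsU1 hw add1n exprS mulN1r.
by rewrite -[in RHS](setD1K hw) cardsU1 setD11 add1n exprS mulN1r opprK.
Qed.

End Toggle.

Section Excess.
Variables (I : finType) (Theta : I -> int) (d : dimvec I).
Implicit Types a b : dimvec I.

(* Clearing denominators in mu(a) - mu(d). *)
Definition excess a : int :=
  theta_of Theta a * (totdim d)%:Z - theta_of Theta d * (totdim a)%:Z.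

Lemma slope_lt_excess a : (0 < totdim d)%N -> (0 < totdim a)%N ->
  (slope Theta d < slope Theta a) = (0 < excess a).
Proof.
move=> hd ha; rewrite /slope /excess subr_gt0.
rewrite ltr_pdivrMr ?ltr0n // mulrAC ltr_pdivlMr ?ltr0n //.
rewrite -[(totdim a)%:R]/((totdim a)%:Z%:~R) -[(totdim d)%:R]/((totdim d)%:Z%:~R).
by rewrite -!intrM ltr_int.
Qed.

Lemma excessD a b : excess (dimD a b) = excess a + excess b.
Proof.
rewrite /excess /theta_of /totdim /dimD big_split /= PoszD mulrDr.
rewrite (_ : \sum_i _ = \sum_i Theta i * (a i)%:Z + \sum_i Theta i * (b i)%:Z).
  by rewrite mulrDl opprD addrACA.
by rewrite -big_split; apply: eq_bigr => i _; rewrite PoszD mulrDr.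
Qed.

Lemma excess0 a : totdim a = 0%N -> excess a = 0.
Proof.
move=> h0; rewrite /excess h0 mulr0 subr0 /theta_of big1 ?mul0r // => i _.
by move/eqP: h0; rewrite sum_nat_eq0 => /forallP /(_ i) /eqP ->; rewrite mulr0.
Qed.

End Excess.

Section SubfamLattice.
Variables (I : finType) (r : I -> I -> nat) (k : finFieldType).
Variables (d : dimvec I) (X : rep r k d).
Implicit Types U V W : subfam k d.

Definition subfam_cap U V : subfam k d := [ffun i => <<(U i :&: V i)%MS>>%MS].
Definition subfam_add U V : subfam k d := [ffun i => <<(U i + V i)%MS>>%MS].

Lemma subfam_capl U V : subfam_le (subfam_cap U V) U.
Proof. by apply/forallP => i; rewrite ffunE genmxE capmxSl. Qed.

Lemma subfam_capr U V : subfam_le (subfam_cap U V) V.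
Proof. by apply/forallP => i; rewrite ffunE genmxE capmxSr. Qed.

Lemma subfam_le_cap W U V : subfam_le W U -> subfam_le W V -> subfam_le W (subfam_cap U V).
Proof.
by move=> /forallP hU /forallP hV; apply/forallP => i; rewrite ffunE genmxE sub_capmx hU hV.
Qed.

Lemma rk_cap_add U V : dimD (rk (subfam_add U V)) (rk (subfam_cap U V)) = dimD (rk U) (rk V).
Proof.
by apply: functional_extensionality => i; rewrite /dimD /rk !ffunE !mxrank_gen mxrank_sum_cap.
Qed.

Lemma subrep_cap U V : is_subrep X U -> is_subrep X V -> is_subrep X (subfam_cap U V).
Proof.
move=> /andP [_ /'forall_forallP hU] /andP [_ /'forall_forallP hV]; apply/andP; split.
  by apply/forallP => i; rewrite ffunE genmx_id.
apply/'forall_forallP => i j; apply/forallP => a.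
rewrite !ffunE (eqmxMr _ (genmxE _)) genmxE sub_capmx.
rewrite (submx_trans (submxMr _ (capmxSl _ _)) (forallP (hU i j) a)).
exact: submx_trans (submxMr _ (capmxSr _ _)) (forallP (hV i j) a).
Qed.

Lemma subrep_add U V : is_subrep X U -> is_subrep X V -> is_subrep X (subfam_add U V).
Proof.
move=> /andP [_ /'forall_forallP hU] /andP [_ /'forall_forallP hV]; apply/andP; split.
  by apply/forallP => i; rewrite ffunE genmx_id.
apply/'forall_forallP => i j; apply/forallP => a.
rewrite !ffunE (eqmxMr _ (genmxE _)) genmxE addsmxMr.
exact: addsmxS (forallP (hU i j) a) (forallP (hV i j) a).
Qed.

End SubfamLattice.

Section Involution.
Variables (I : finType) (r : I -> I -> nat) (k : finFieldType) (Theta : I -> int).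
Variables (d : dimvec I) (X : rep r k d).
Hypothesis d_gt0 : (0 < totdim d)%N.
Local Notation above := (destab_above Theta X).
Local Notation S0 := (subfam0 k d).
Local Notation ex U := (excess Theta d (rk U)).
Implicit Types (U V W : subfam k d) (A : {set subfam k d}).

Lemma above0_excess U : is_subrep X U -> above S0 U = (0 < ex U).
Proof.
move=> hU; rewrite /destab_above hU subfam0_le /=.
have cS0 := subrep_canonical (subrep0 X); have cU := subrep_canonical hU.
case: (posnP (totdim (rk U))) => [h0|hp]; last first.
  rewrite -slope_lt_excess // (_ : U != S0) //.
  by apply: contraTneq hp => ->; rewrite totdim_rk_subfam0.
rewrite (subfam_le_totdim_eq cS0 cU (subfam0_le U)) ?h0 // eqxx /=.
by rewrite excess0 ?totdim_rk_subfam0.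
Qed.

Section MaximalExcess.
Variable m : subfam k d.
Hypotheses (m_subrep : is_subrep X m) (m_pos : 0 < ex m).
Hypothesis m_max : forall U, is_subrep X U -> ex U <= ex m.

Lemma above0_cap U : above S0 U -> above S0 (subfam_cap U m).
Proof.
move=> hU; have sU := above_subrep hU.
rewrite above0_excess // in hU; rewrite above0_excess ?subrep_cap //.
have := excessD Theta d (rk (subfam_add U m)) (rk (subfam_cap U m)).
rewrite rk_cap_add excessD => mod_eq.
by have := m_max (subrep_add sU m_subrep); lia.
Qed.

Lemma above0_m : above S0 m.
Proof. by rewrite above0_excess. Qed.

(* The chains above 0 are paired by toggling one element: the meet with m of the
   least element not below m if there is one, and m itself otherwise. *)
Definition high A := [exists V in A, ~~ subfam_le V m].
Definition least_high A := odflt m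
  [pick V in A | ~~ subfam_le V m && [forall U in A, ~~ subfam_le U m ==> subfam_le V U]].
Definition flip A := if high A then toggle A (subfam_cap (least_high A) m) else toggle A m.

Lemma least_highP A : chain_above Theta X S0 A -> high A ->
  [/\ least_high A \in A, ~~ subfam_le (least_high A) m &
      forall U, U \in A -> ~~ subfam_le U m -> subfam_le (least_high A) U].
Proof.
move=> hA /exists_inP [V0 hV0 hV0m].
have [V /andP [hV hVm] hmin] := chain_least (P := fun U => ~~ subfam_le U m)
  (chain_above_canonical hA) (chain_above_chain hA) hV0 hV0m.
rewrite /least_high; case: pickP => [W /and3P [hW hWm /forall_inP h]|none] /=.
  by split=> // U hU; apply/implyP/h.
move: (none V); rewrite /= hV hVm /= => /negbT/negP[].
by apply/forall_inP => U hU; apply/implyP/hmin.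
Qed.

Lemma chain_toggle A W : chain_above Theta X S0 A -> above S0 W ->
  {in A, forall U, subfam_le U W || subfam_le W U} -> chain_above Theta X S0 (toggle A W).
Proof.
move=> hA hW hcmp.
have memT U : U \in toggle A W -> (U == W) || (U \in A) by rewrite in_toggle; case: eqP.
apply/andP; split.
  by apply/forall_inP => U /memT /orP [/eqP ->|/(chain_above_mem hA)].
apply/forall_inP => U /memT hU; apply/forall_inP => V /memT hV.
case/orP: hU => [/eqP ->|hU]; case/orP: hV => [/eqP ->|hV].
- by rewrite subfam_le_refl.
- by rewrite orbC hcmp.
- exact: hcmp.
- exact: forall_inP (forall_inP (chain_above_chain hA) U hU) V hV.
Qed.

Lemma flip_chain A : chain_above Theta X S0 A -> chain_above Theta X S0 (flip A).
Proof.
move=> hA; rewrite /flip; case: ifP => hh; last first.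
  apply: chain_toggle => // [|U hU]; first exact: above0_m.
  by move/negbT: hh; rewrite negb_exists_in => /forall_inP/(_ U hU); rewrite negbK => ->.
have [hV hVm hmin] := least_highP hA hh.
apply: chain_toggle => //; first exact/above0_cap/(chain_above_mem hA).
move=> U hU; case: (boolP (subfam_le U m)) => hUm; last first.
  by rewrite (subfam_le_trans (subfam_capl _ _) (hmin U hU hUm)) orbT.
rewrite subfam_le_cap //.
case/orP: (forall_inP (forall_inP (chain_above_chain hA) U hU) _ hV) => // hVU.
by move: hVm; rewrite (subfam_le_trans hVU hUm).
Qed.

Lemma flipK A : chain_above Theta X S0 A -> flip (flip A) = A.
Proof.
move=> hA; have hA' := flip_chain hA.
rewrite [flip A]/flip in hA' *; case: ifP => hh in hA' *; last first.
  rewrite /flip ifF ?toggleK //; apply/negbTE; rewrite negb_exists_in; apply/forall_inP => U.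
  rewrite negbK in_toggle; case: eqP => [->|_ hU]; first by rewrite subfam_le_refl.
  by move/negbT: hh; rewrite negb_exists_in => /forall_inP/(_ U hU); rewrite negbK.
set W := subfam_cap (least_high A) m.
have [hV hVm hmin] := least_highP hA hh.
have hVW : least_high A != W by apply: contraNneq hVm => ->; exact: subfam_capr.
have hVt : least_high A \in toggle A W by rewrite in_toggle (negbTE hVW).
have hh' : high (toggle A W) by apply/exists_inP; exists (least_high A).
rewrite /flip hh'; suff -> : least_high (toggle A W) = least_high A by rewrite toggleK.
have [hV' hV'm hmin'] := least_highP hA' hh'.
have hV'A : least_high (toggle A W) \in A.
  move: hV'; rewrite in_toggle; case: eqP => // eW.
  by move: hV'm; rewrite eW subfam_capr.
apply: subfam_le_anti; [exact: chain_above_canonical hA' _ hV'|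
  exact: chain_above_canonical hA _ hV|exact: hmin'|exact: hmin].
Qed.

Lemma chain_sum0_eq0 : chain_sum Theta X S0 = 0.
Proof.
have flip_sum : chain_sum Theta X S0 = - chain_sum Theta X S0.
  rewrite {1}/chain_sum (reindex_onto flip flip) => [|A hA]; last exact: flipK.
  rewrite /chain_sum -sumrN; apply: eq_big => A.
    apply/andP/idP => [[hA /eqP <-]|hA]; first exact: flip_chain.
    by rewrite flip_chain // flipK.
  by rewrite /flip; case: ifP => _ _; rewrite sign_toggle.
by apply/eqP; rewrite -[_ == 0](mulrn_eq0 _ 2) mulr2n {1}flip_sum addNr.
Qed.

End MaximalExcess.

Lemma semistable_excessP : reflect (forall U, is_subrep X U -> ex U <= 0) (semistable Theta X).
Proof.
apply: (iffP forallP) => h U.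
  move=> hU; case: (posnP (totdim (rk U))) => [/excess0 -> //|hp].
  by move/implyP: (h U); rewrite hU hp leNgt slope_lt_excess // -leNgt; apply.
apply/implyP => /andP [hU hp]; rewrite leNgt slope_lt_excess // -leNgt; exact: h.
Qed.

Lemma chain_sum0_semistable : chain_sum Theta X S0 = if semistable Theta X then 1 else 0.
Proof.
case: semistable_excessP => [ss|unstable].
  rewrite /chain_sum (big_pred1 set0) ?cards0 ?expr0 // => A /=.
  apply/idP/eqP => [hA|->]; last exact: chain_above0.
  apply/setP => U; rewrite in_set0; apply/negbTE/negP => /(chain_above_mem hA) hU.
  by move: (hU); rewrite above0_excess ?(above_subrep hU) // ltNge ss ?(above_subrep hU).
have [m hm m_max] :=
  @Order.TotalTheory.arg_maxP _ _ _ S0 (is_subrep X) (fun U => ex U) (subrep0 X).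
have : ~~ [forall U, is_subrep X U ==> (ex U <= 0)].
  by apply/forallP => h; apply: unstable => U; apply/implyP/h.
rewrite negb_forall => /existsP [U0]; rewrite negb_imply -ltNge => /andP [hU0 U0_pos].
exact: chain_sum0_eq0 hm (lt_le_trans U0_pos (m_max U0 hU0)) m_max.
Qed.

End Involution.

Section TupleSums.
Variables (I : finType) (r : I -> I -> nat) (k : finFieldType) (Theta : I -> int).
Variable d : dimvec I.
Local Notation D := {ffun I -> 'I_(totdim d).+1}.

Lemma sum_admissible_adm_term (X : rep r k d) s :
  \sum_(t : {ffun 'I_s.+1 -> D} | admissible Theta d t)
     (-1) ^+ s * vq k ^ (- euler_star r t)
     * chi_prod (head (fun _ => 0%N) (dseq t)) (behead (dseq t)) X
  = adm_term Theta X s (subfam0 k d).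
Proof.
rewrite big_mkcond sum_fcons /adm_term; apply: eq_bigr => x _; apply: eq_bigr => t _.
rewrite admissible_adm_from (_ : (fun _ => 0%N) = rk (subfam0 k d)); last first.
  by apply: functional_extensionality => i; rewrite rk_subfam0.
case: ifP => // _; rewrite -euler_seq_dseq dseq_fcons /= chi_prod_flag_count.
by rewrite -mulrA (mulrA (vq k ^ _)) -expfzDr ?vq_neq0 // addNr expr0z mul1r.
Qed.

Lemma chi_prod_admissible_eq0 e (X : rep r k e) s (t : {ffun 'I_s.+1 -> D}) :
  admissible Theta d t -> ~~ dimeq e d ->
  chi_prod (head (fun _ => 0%N) (dseq t)) (behead (dseq t)) X = 0.
Proof.
rewrite -[t]fcons_eta; move: (t ord0) (ftail t) => x {}t.
case/and4P => _ _ /dimeqP sum_t _; rewrite dseq_fcons /= chi_prod_flag_count.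
apply: contraNeq; rewrite mulf_eq0 negb_or => /andP [_ /flag_count_dim dim_X].
apply/dimeqP => i; move: (dim_X i) (sum_t i).
by rewrite rk_subfam0 subn0 -dseq_fcons sum_dims_dseq => -> <-.
Qed.

End TupleSums.

Unset Implicit Arguments.

Theorem mainTheorem11 (I : finType) (r : I -> I -> nat) (k : finFieldType)
  (Theta : I -> int) (d : I -> nat) :
  acyclic r -> (0 < totdim d)%N ->
  forall (e : I -> nat) (X : rep r k e),
    chi_ss Theta d X =
    \sum_(s < (totdim d).+1)
      \sum_(t : {ffun 'I_s -> {ffun I -> 'I_(totdim d).+1}} | admissible Theta d t)
        (-1) ^+ (s.-1) * vq k ^ (- euler_star r t)
        * chi_prod (head (fun _ => 0%N) (dseq t)) (behead (dseq t)) X.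
Proof.
move=> _ d_gt0 e X; rewrite big_ord_recl big1 ?add0r => [|t /andP []//].
have [/dimeqP/functional_extensionality ed|ned] := boolP (dimeq e d); last first.
  rewrite /chi_ss (negbTE ned); symmetry; apply: big1 => s _; apply: big1 => t adm_t.
  by rewrite (chi_prod_admissible_eq0 _ adm_t) ?mulr0.
subst e; under eq_bigr => s _ do rewrite sum_admissible_adm_term.
rewrite /chi_ss dimeq_refl /= -chain_sum0_semistable //; symmetry.
apply: adm_sum_chain_sum.
- exact: subrep0.
- apply: contraTN d_gt0 => /dimeqP /functional_extensionality <-.
  by rewrite totdim_rk_subfam0.
- by rewrite totdim_rk_subfam0 subn0.
Qed.
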